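(* Let $\Sigma=(X,U,F)$ be a system, $Q\subset X$ a controlled invariant set with $\sharp Q<\infty$, and $V\subset U$ a finite cover of $Q$ such that: (C.1) $Q_a\cap Q_b=\emptyset$ for all distinct $a,b\in V$; (C.2) for all $a,b\in V$ with $M_{ab}=1$ there exists $K\subset Q_a$ such that $Q_b\subset F(K,a)$; (C.3) $Q_c=\emptyset$ for every $c\in U\setminus V$. Let $\mathcal{A}_V=\{Q_a:a\in V\}$ and $G_V(Q_a)=a$, and suppose $(\mathcal{C},G_{\mathcal{C}})$ is the atom refinement of $(\mathcal{A}_V,G_V)$. Then \[h^{fb}_{inv}(Q)=h_{inv}(\mathcal{C},G_{\mathcal{C}}).\]
   Context: A system is a triple $\Sigma=(X,U,F)$ where $X,U$ are nonempty sets and $F:X\times U\rightrightarrows X$ is a set-valued map with $F(x,u)\neq\emptyset$ for all $(x,u)$; for $A\subset X$, $F(A,u)=\bigcup_{x\in A}F(x,u)$. $Q\subset X$ is controlled invariant if for every $x\in Q$ there is $u\in U$ with $F(x,u)\subset Q$. For $u\in U$ put $Q_u=\{x\in Q:F(x,u)\subset Q\}$. A set $V\subset U$ is a cover of $Q$ if $Q\subset\bigcup_{a\in V}Q_a$; the admissible matrix $M_{Q,V}=(M_{ab})_{a,b\in V}$ has $M_{ab}=1$ if there exists $x\in Q_a$ with $F(x,a)\cap Q_b\neq\emptyset$, and $0$ otherwise. An invariant cover of $Q$ is a pair $(\mathcal{A},G)$ where $\mathcal{A}$ is a finite cover of $Q$ (by subsets of $Q$) and $G:\mathcal{A}\to U$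 satisfies $F(A,G(A))\subset Q$ for all $A\in\mathcal{A}$. For $\mathcal{S}\subset\mathcal{A}^n$, $\alpha=\alpha(0)\cdots\alpha(n-1)\in\mathcal{S}$ and integer $0\le t<n-1$, let $P(\alpha|_{[0,t]})=\{A\in\mathcal{A}:\exists\hat\alpha\in\mathcal{S},\ \hat\alpha|_{[0,t]}=\alpha|_{[0,t]},\ A=\hat\alpha(t+1)\}$, and $P(\alpha|_{[0,n-1]})=P(\alpha)=\{\hat\alpha(0):\hat\alpha\in\mathcal{S}\}$. $\mathcal{S}$ is $(n,Q)$-spanning in $(\mathcal{A},G)$ if (1) the elements of $P(\alpha)$ cover $Q$, and (2) for every $\alpha\in\mathcal{S}$ and $0\le t<n-1$, $F(\alpha(t),G(\alpha(t)))\subset\bigcup_{A'\in P(\alpha|_{[0,t]})}A'$. Let $N(\mathcal{S})=\max_{\alpha\in\mathcal{S}}\prod_{t=0}^{n-1}\sharp P(\alpha|_{[0,t]})$, $r_{inv}(n,Q,\mathcal{A},G)=\min\{N(\mathcal{S}):\mathcal{S}\ (n,Q)\text{-spanning in }(\mathcal{A},G)\}$, $h_{inv}(\mathcal{A},G)=\lim_{n\to\infty}\frac1n\log r_{inv}(n,Q,\mathcal{A},G)$ ($\log$ base $2$), and the invariance feedback entropy $h^{fb}_{inv}(Q)=\inf_{(\mathcal{A},G)}h_{inv}(\mathcal{A},G)$ over all invariant covers of $Q$. A refinement of $(\mathcal{A}_V,G_V)$ is a pair $(\mathcal{B},G_{\mathcal{B}})$ where $\mathcal{B}$ is a cover of $Q$,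 every $B\in\mathcal{B}$ is contained in some $A\in\mathcal{A}_V$, and $G_{\mathcal{B}}(B)=G_V(A)$. A refinement $(\mathcal{C},G_{\mathcal{C}})$ is the atom refinement of $(\mathcal{A}_V,G_V)$ if $\mathcal{C}=\{\{x\}:x\in Q\}$ (so $G_{\mathcal{C}}(\{x\})=a$ for the unique $a\in V$ with $x\in Q_a$) and $\sharp\big(F(x,a)\cap Q_b\big)\le1$ for all $a,b\in V$ and all $x\in Q_a$. *)

From HB Require Import structures.
From mathcomp Require Import all_boot all_order all_algebra.
From mathcomp Require Import finmap.
From mathcomp Require Import all_classical all_reals.
From mathcomp Require Import topology normedtype sequences exp.
Set Implicit Arguments. Unset Strict Implicit. Unset Printing Implicit Defensive.
Import Order.TTheory GRing.Theory Num.Theory numFieldTopology.Exports numFieldNormedType.Exports.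
Local Open Scope classical_set_scope.
Local Open Scope ring_scope.

Section InvFeedbackEntropy.
Context {X U : Type}.

Definition Fimg (F : X -> U -> set X) (A : set X) (u : U) : set X :=
  \bigcup_(x in A) F x u.

Definition is_system (F : X -> U -> set X) : Prop :=
  forall x u, F x u !=set0.

Definition controlled_invariant (F : X -> U -> set X) (Q : set X) : Prop :=
  forall x, Q x -> exists u, F x u `<=` Q.

Definition Qu (F : X -> U -> set X) (Q : set X) (u : U) : set X :=
  [set x | Q x /\ F x u `<=` Q].

Definition is_cover (F : X -> U -> set X) (Q : set X) (V : set U) : Prop :=
  Q `<=` \bigcup_(a in V) Qu F Q a.

(* entries of the admissible matrix M_{Q,V}: M_ab = 1 *)
Definition Mab (F : X -> U -> set X) (Q : set X) (a b : U) : Prop :=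
  exists x, Qu F Q a x /\ (F x a `&` Qu F Q b) !=set0.

(* invariant cover (A, G) of Q; G is only relevant on elements of A *)
Definition invariant_cover (F : X -> U -> set X) (Q : set X)
  (A : set (set X)) (G : set X -> U) : Prop :=
  [/\ finite_set A,
      (forall B, A B -> B `<=` Q),
      Q `<=` \bigcup_(B in A) B &
      (forall B, A B -> Fimg F B (G B) `<=` Q)].

(* words of length n over A, as sequences; alpha(t) = nth set0 alpha t *)
Definition words (A : set (set X)) (n : nat) : set (seq (set X)) :=
  [set al | size al = n /\ forall t, (t < n)%N -> A (nth set0 al t)].

(* P(alpha|_[0,t]) for t < n-1, and P(alpha|_[0,n-1]) = P(alpha) *)
Definition Pset (S : set (seq (set X))) (n : nat) (al : seq (set X)) (t : nat)
  : set (set X) :=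
  if (t.+1 < n)%N then
    [set B | exists be, S be /\ take t.+1 be = take t.+1 al /\ B = nth set0 be t.+1]
  else [set B | exists be, S be /\ B = nth set0 be 0].

Definition spanning (F : X -> U -> set X) (Q : set X)
  (A : set (set X)) (G : set X -> U) (n : nat) (S : set (seq (set X))) : Prop :=
  [/\ S `<=` words A n,
      Q `<=` \bigcup_(B in Pset S n [::] n.-1) B &
      (forall al, S al -> forall t, (t.+1 < n)%N ->
         Fimg F (nth set0 al t) (G (nth set0 al t))
           `<=` \bigcup_(B in Pset S n al t) B)].

Definition NS (S : set (seq (set X))) (n : nat) : nat :=
  \max_(al <- fset_set S) \prod_(t < n) #|` fset_set (Pset S n al t)|.

Variable R : realType.

Definition r_inv (F : X -> U -> set X) (Q : set X)
  (A : set (set X)) (G : set X -> U) (n : nat) : R :=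
  inf [set (NS S n)%:R | S in spanning F Q A G n].

Definition log2 (x : R) : R := ln x / ln 2.

Definition h_inv (F : X -> U -> set X) (Q : set X)
  (A : set (set X)) (G : set X -> U) : R :=
  limn (fun n : nat => log2 (r_inv F Q A G n) / n%:R).

Definition h_fb_inv (F : X -> U -> set X) (Q : set X) : R :=
  inf [set h_inv F Q AG.1 AG.2 | AG in [set AG | invariant_cover F Q AG.1 AG.2]].

Definition atom_refinement (F : X -> U -> set X) (Q : set X) (V : set U)
  (C : set (set X)) (GC : set X -> U) : Prop :=
  [/\ C = [set [set x] | x in Q],
      (forall x, Q x -> V (GC [set x]) /\ Qu F Q (GC [set x]) x) &
      (forall a b x, V a -> V b -> Qu F Q a x ->
         forall y z, (F x a `&` Qu F Q b) y -> (F x a `&` Qu F Q b) z -> y = z)].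

End InvFeedbackEntropy.

From HB Require Import structures.
From mathcomp Require Import all_boot all_order all_algebra.
From mathcomp Require Import finmap.
From mathcomp Require Import all_classical all_reals.
From mathcomp Require Import topology normedtype sequences exp.
From mathcomp Require Import zify lra.
Set Implicit Arguments. Unset Strict Implicit. Unset Printing Implicit Defensive.
Import Order.TTheory GRing.Theory Num.Theory numFieldTopology.Exports numFieldNormedType.Exports.
Local Open Scope classical_set_scope.
Local Open Scope ring_scope.

(* Let (A, G) be any invariant cover and S an (n, Q)-spanning set for it. By (C.1) and (C.3)
   every block B of A that contains x is controlled by G(B) = G_C({x}), the unique a in V with
   x in Q_a. Hence S can follow every closed-loop trajectory x_0 ... x_{n-1} of the atom cover,
   and since F(x_t, a) meets each Q_b, and so each block, in at most one point, the successors
   of x_t inject into the blocks of P(beta|[0,t]). Only the last factor of N escapes this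
   comparison, which gives r_inv(n, C) <= #C * r_inv(n, A, G). The sequences
   log2 r_inv(n, -) / n converge by Fekete's lemma, r_inv being submultiplicative under
   concatenation of spanning sets, so h_inv(C, G_C) <= h_inv(A, G); and (C, G_C) is itself
   an invariant cover. *)

(** * Fekete's lemma *)

Section Fekete.
Variable R : realType.

Lemma cvgn_div_nat (c : R) : (fun n : nat => c / n%:R) @ \oo --> 0.
Proof.
have inv_cvg0 : (fun n : nat => (n%:R : R)^-1) @ \oo --> 0.
  apply/gtr0_cvgV0; last exact: cvgr_idn.
  by near=> n; rewrite ltr0n; near: n; exists 1%N.
by rewrite -(mulr0 c); apply: cvgM => //; exact: cvg_cst.
Unshelve. all: by end_near. Qed.

Lemma subadditive_le_mul (b : nat -> R) (k : nat) : (0 < k)%N ->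
  (forall n, 0 <= b n) ->
  (forall n m, (0 < n)%N -> (0 < m)%N -> b (n + m)%N <= b n + b m) ->
  forall q s, b (q * k + s)%N <= q%:R * b k + b s.
Proof.
move=> k0 b_ge0 b_sub; elim=> [|q IH] s; first by rewrite mul0n add0n mul0r add0r.
rewrite mulSn -addnA mulrS mulrDl mul1r -addrA.
have [->|qks0] := posnP (q * k + s)%N.
  by rewrite addn0 lerDl addr_ge0 ?mulr_ge0.
by apply: le_trans (b_sub _ _ k0 qks0) _; rewrite lerD2l.
Qed.

Lemma fekete (b : nat -> R) :
  (forall n, 0 <= b n) ->
  (forall n m, (0 < n)%N -> (0 < m)%N -> b (n + m)%N <= b n + b m) ->
  cvgn (fun n => b n / n%:R).
Proof.
move=> b_ge0 b_sub.
set E := [set b n / n%:R | n in [set n | (0 < n)%N]].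
have E_lb0 : lbound E 0 by move=> _ [n _ <-]; rewrite divr_ge0.
have E_inf : has_inf E by split; [exists (b 1%N / 1); exists 1%N | exists 0].
apply/cvg_ex; exists (inf E); apply/cvgrPdist_le => e e0.
have e2_gt0 : 0 < e / 2 by rewrite divr_gt0.
have [_ [k k0 <-] bk_lt] := inf_adherent e2_gt0 E_inf.
set M := \sum_(s < k) b s.
have M_small : \forall n \near \oo, M / n%:R <= e / 2.
  have /cvgrPdist_le/(_ _ e2_gt0) := cvgn_div_nat M.
  by apply: filterS => n; rewrite sub0r normrN; apply: le_trans; exact: ler_norm.
near=> n.
have n_pos : (0 < n)%N by near: n; exists 1%N.
have n_gt0 : (0 < n%:R :> R) by rewrite ltr0n.
have inf_le : inf E <= b n / n%:R by apply: ge_inf; [exists 0 | exists n].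
have bn_le : b n <= (n %/ k)%N%:R * b k + M.
  rewrite {1}(divn_eq n k); apply: le_trans (subadditive_le_mul k0 b_ge0 b_sub _ _) _.
  by rewrite lerD2l /M (bigD1 (Ordinal (ltn_pmod n k0))) //= lerDl sumr_ge0.
have quot_le : (n %/ k)%N%:R * b k <= n%:R * (b k / k%:R).
  rewrite mulrA ler_pdivlMr ?ltr0n // -mulrA [b k * _]mulrC mulrA -natrM.
  by rewrite ler_wpM2r // ler_nat leq_trunc_div.
have bn_div_le : b n / n%:R <= b k / k%:R + M / n%:R.
  rewrite ler_pdivrMr // mulrDl divfK ?gt_eqF // [_ * n%:R]mulrC; lra.
have Ms : M / n%:R <= e / 2 by near: n.
rewrite ler_norml; apply/andP; split; lra.
Unshelve. all: by end_near. Qed.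

End Fekete.

Section Log2.
Variable R : realType.

Lemma log2_nat_ge0 (k : nat) : 0 <= log2 (k%:R : R).
Proof.
apply: divr_ge0; last by rewrite ln_ge0 // ler1n.
by case: k => [|k]; [rewrite ln0 | apply: ln_ge0; rewrite ler1n].
Qed.

Lemma log2_nat_leD (a b c : nat) : (a <= b * c)%N ->
  log2 (a%:R : R) <= log2 (b%:R : R) + log2 (c%:R : R).
Proof.
case: a => [|a] le_abc; first by rewrite /log2 ln0 // mul0r addr_ge0 ?log2_nat_ge0.
have /andP[b_gt0 c_gt0] : (0 < b)%N && (0 < c)%N by rewrite -muln_gt0 (leq_trans _ le_abc).
rewrite /log2 -mulrDl ler_wpM2r ?invr_ge0 ?ln_ge0 ?ler1n //.
rewrite -lnM ?posrE ?ltr0n // -natrM ler_ln ?posrE ?ltr0n ?muln_gt0 ?b_gt0 //.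
by rewrite ler_nat.
Qed.

End Log2.

Lemma inf_attained (R : realType) (E : set R) x : E x -> lbound E x -> inf E = x.
Proof.
move=> Ex x_lb; apply/eqP; rewrite eq_le lb_le_inf ?andbT //; last by exists x.
exact: ge_inf (ex_intro _ x x_lb) _ Ex.
Qed.

Section Cardinality.
Local Open Scope nat_scope.
Local Open Scope card_scope.

Lemma card_fset_set_le (T T' : choiceType) (A : set T) (B : set T') :
  finite_set B -> A #<= B -> #|` fset_set A| <= #|` fset_set B|.
Proof.
move=> /finite_setP[m Bm] AB; rewrite (card_fset_set Bm) geq_card_fset_set //.
by rewrite -(card_le_eqr Bm).
Qed.

Lemma card_le_cover (T : Type) (Y : set T) (P : set (set T)) :
  Y `<=` \bigcup_(B in P) B ->
  (forall B y z, P B -> Y y -> Y z -> B y -> B z -> y = z) -> Y #<= P.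
Proof.
move=> Y_cover block_uniq.
have /choice[block block_spec] : forall y, exists B, Y y -> P B /\ B y.
  move=> y; have [Yy|] := pselect (Y y); last by exists set0.
  by have [B PB By] := Y_cover y Yy; exists B.
rewrite -(card_le_eql (inj_card_eq (f := block) _)).
  by apply: subset_card_le => _ [y Yy <-]; have [] := block_spec y Yy.
move=> y z; rewrite !inE => Yy Yz eq_block.
have [Py By] := block_spec y Yy; have [_ Bz] := block_spec z Yz.
by apply: (block_uniq (block y)) => //; rewrite eq_block.
Qed.

End Cardinality.

Lemma eq_set1 (T : Type) (x y : T) : [set x] = [set y] -> x = y.
Proof. by move=> eq_xy; have : [set x] y by rewrite eq_xy. Qed.

Lemma take_mkseq_eq (T : Type) (f g : nat -> T) (k n : nat) :
  (forall s, (s < k)%N -> f s = g s) -> take k (mkseq f n) = take k (mkseq g n).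
Proof.
move=> fg; rewrite /mkseq -!map_take; apply/eq_in_map => s.
by rewrite take_iota mem_iota add0n /= => /leq_trans/(_ (geq_minl _ _)); exact: fg.
Qed.

Lemma prodn_cat_swap_last (f g1 g2 : nat -> nat) (n m : nat) : (0 < n)%N -> (0 < m)%N ->
  (forall t, (t.+1 < n)%N -> f t = g1 t) -> f n.-1 = g2 m.-1 ->
  (forall t, (t.+1 < m)%N -> f (n + t)%N = g2 t) -> f (n + m).-1 = g1 n.-1 ->
  (\prod_(t < n + m) f t = \prod_(t < n) g1 t * \prod_(t < m) g2 t)%N.
Proof.
case: n m => [|n] [|m] //= _ _ f_g1 fn f_g2; rewrite addnS => fnm.
rewrite big_split_ord /= !big_ord_recr /= fn fnm.
have -> : (\prod_(t < n) f t = \prod_(t < n) g1 t)%N.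
  by apply: eq_bigr => t _; rewrite f_g1 ?ltnS.
have -> : (\prod_(t < m) f (n.+1 + t) = \prod_(t < m) g2 t)%N.
  by apply: eq_bigr => t _; rewrite f_g2 ?ltnS.
by rewrite mulnACA [(g2 m * _)%N]mulnC -mulnACA.
Qed.

Lemma prodn_le_last (f g : nat -> nat) (c n : nat) : (0 < n)%N ->
  (forall t, (t.+1 < n)%N -> (f t <= g t)%N) -> (f n.-1 <= c)%N -> (0 < g n.-1)%N ->
  (\prod_(t < n) f t <= c * \prod_(t < n) g t)%N.
Proof.
case: n => // n _ le_fg fc g_gt0; rewrite !big_ord_recr /= [(c * _)%N]mulnC leq_mul //.
apply: leq_trans (leq_pmulr _ g_gt0).
by apply: leq_prod => t _; apply: le_fg; rewrite ltnS.
Qed.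

(** * Spanning sets *)

Section SpanningSets.
Context {X U : Type}.
Local Open Scope nat_scope.
Variables (F : X -> U -> set X) (Q : set X) (A : set (set X)) (G : set X -> U).
Implicit Types (S : set (seq (set X))) (al : seq (set X)).

Lemma finite_words n : finite_set A -> finite_set (words A n).
Proof.
move=> finA; elim: n => [|n IH].
  by apply: sub_finite_set (finite_set1 [::]) => al [/size0nil].
apply: (@sub_finite_set _ _ [set p.1 :: p.2 | p in A `*` words A n]).
  move=> [|B al] [//= [size_al] al_A]; exists (B, al) => //.
  by split; [exact: (al_A 0) | split => // t; exact: (al_A t.+1)].
exact/finite_image/finite_setX.
Qed.

Lemma Pset_sub S n al t : S `<=` words A n -> 0 < n -> Pset S n al t `<=` A.
Proof.
move=> S_words n_gt0 B; rewrite /Pset; case: ifP => tn.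
  by move=> [be [/S_words[_ be_A] [_ ->]]]; exact: be_A.
by move=> [be [/S_words[_ be_A] ->]]; exact: be_A.
Qed.

Lemma Pset_last S n al : 0 < n -> Pset S n al n.-1 = [set nth set0 be 0 | be in S].
Proof.
move=> n_gt0; rewrite /Pset prednK // ltnn; apply/seteqP; split => B.
  by move=> [be [Sbe ->]]; exists be.
by move=> [be Sbe <-]; exists be.
Qed.

Lemma spanning_heads n S : 0 < n -> spanning F Q A G n S ->
  Q `<=` \bigcup_(B in [set nth set0 be 0 | be in S]) B.
Proof. by move=> n_gt0 [_ init _]; rewrite Pset_last in init. Qed.

Lemma NS_ge S n al : finite_set S -> S al ->
  \prod_(t < n) #|` fset_set (Pset S n al t)| <= NS S n.
Proof.
move=> finS Sal; rewrite /NS.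
by apply: (leq_bigmax_seq al) => //; rewrite in_fset_set ?inE.
Qed.

Lemma NS_le S n k : finite_set S ->
  (forall al, S al -> \prod_(t < n) #|` fset_set (Pset S n al t)| <= k) ->
  NS S n <= k.
Proof.
move=> finS le_k; apply/bigmax_leqP_seq => al.
by rewrite in_fset_set ?inE // => Sal _; exact: le_k.
Qed.

Lemma spanning_finite n S : finite_set A -> spanning F Q A G n S -> finite_set S.
Proof. by move=> finA [S_words _ _]; apply: sub_finite_set S_words (finite_words n finA). Qed.

Lemma r_inv_attained (R : realType) n : (exists S, spanning F Q A G n S) ->
  exists S0, [/\ spanning F Q A G n S0, r_inv R F Q A G n = (NS S0 n)%:R%R &
    forall S, spanning F Q A G n S -> NS S0 n <= NS S n].
Proof.
move=> spanning_ex.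
pose P k := `[< exists2 S, spanning F Q A G n S & NS S n = k >].
have P_ex : exists k, P k by have [S span] := spanning_ex; exists (NS S n); apply/asboolP; exists S.
have [_ /asboolP[S0 span0 <-] min0] := ex_minnP P_ex.
have {}min0 S : spanning F Q A G n S -> NS S0 n <= NS S n.
  by move=> span; apply: min0; apply/asboolP; exists S.
exists S0; split => //; apply: inf_attained; first by exists S0.
by move=> _ [S span <-]; rewrite ler_nat min0.
Qed.

Lemma r_inv_nat (R : realType) n : exists k : nat, r_inv R F Q A G n = k%:R%R.
Proof.
have [spanning_ex|no_spanning] := pselect (exists S, spanning F Q A G n S).
  by have [S0 [_ -> _]] := r_inv_attained R spanning_ex; exists (NS S0 n).
exists 0; rewrite /r_inv -[RHS]inf0; congr inf.
by apply/seteqP; split => // x [S span _]; apply: no_spanning; exists S.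
Qed.

Hypothesis cover : invariant_cover F Q A G.

Lemma words_spanning n : 0 < n -> spanning F Q A G n (words A n).
Proof.
have [_ _ QA FA] := cover; move=> n_gt0; split => //.
- move=> x Qx; have [B AB Bx] := QA x Qx; exists B => //.
  rewrite Pset_last //; exists (nseq n B); last by rewrite nth_nseq n_gt0.
  by split => [|t tn]; rewrite ?size_nseq ?nth_nseq ?tn.
- move=> al [size_al al_A] t tn y Fy.
  have [B AB By] := QA y (FA _ (al_A t (ltnW tn)) y Fy); exists B => //.
  have size_take : size (take t.+1 al) = t.+1 by rewrite size_takel // size_al ltnW.
  rewrite /Pset tn; exists (take t.+1 al ++ nseq (n - t.+1) B); split; last split.
  + split => [|s sn]; first by rewrite size_cat size_take size_nseq subnKC // ltnW.
    rewrite nth_cat size_take; case: ltnP => [st|ts]; first by rewrite nth_take //; exact: al_A.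
    by rewrite nth_nseq ltn_sub2r.
  + by rewrite take_size_cat.
  + by rewrite nth_cat size_take ltnn subnn nth_nseq subn_gt0 tn.
Qed.

Lemma spanning_exists n : 0 < n -> exists S, spanning F Q A G n S.
Proof. by move=> n_gt0; exists (words A n); exact: words_spanning. Qed.

End SpanningSets.

Definition cat_set (T : Type) (S1 S2 : set (seq T)) : set (seq T) :=
  [set a ++ b | a in S1 & b in S2].

Section Concatenation.
Context {X : Type}.
Local Open Scope nat_scope.
Variables (S1 S2 : set (seq (set X))) (n m : nat).
Hypotheses (n_gt0 : 0 < n) (m_gt0 : 0 < m).
Hypothesis size_S1 : forall a, S1 a -> size a = n.

Section Prefixes.
Variables (a b : seq (set X)).
Hypotheses (S1a : S1 a) (S2b : S2 b).

Lemma Pset_cat_lt t : t.+1 < n -> Pset (cat_set S1 S2) (n + m) (a ++ b) t = Pset S1 n a t.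
Proof.
move=> tn; rewrite /Pset tn ltn_addr //.
have take_catE c d : S1 c -> take t.+1 (c ++ d) = take t.+1 c.
  by move=> S1c; rewrite takel_cat // size_S1 // ltnW.
have nth_catE c d : S1 c -> nth set0 (c ++ d) t.+1 = nth set0 c t.+1.
  by move=> S1c; rewrite nth_cat size_S1 // tn.
apply/seteqP; split => B.
  move=> [_ [[a' S1a' [b' _ <-]] [take_eq ->]]]; exists a'.
  by rewrite !take_catE // in take_eq; rewrite nth_catE.
move=> [a' [S1a' [take_eq ->]]]; exists (a' ++ b); split; first by exists a' => //; exists b.
by rewrite !take_catE // nth_catE.
Qed.

Lemma Pset_cat_mid : Pset (cat_set S1 S2) (n + m) (a ++ b) n.-1 = [set nth set0 be 0 | be in S2].
Proof.
rewrite /Pset prednK // -[X in X < _]addn0 ltn_add2l m_gt0; apply/seteqP; split => B.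
  move=> [_ [[a' S1a' [b' S2b' <-]] [_ ->]]]; exists b' => //.
  by rewrite nth_cat size_S1 // ltnn subnn.
move=> [b' S2b' <-]; exists (a ++ b'); split; first by exists a => //; exists b'.
by rewrite !take_size_cat ?size_S1 // nth_cat size_S1 // ltnn subnn.
Qed.

Lemma Pset_cat_ge t : n <= t -> t.+1 < n + m ->
  Pset (cat_set S1 S2) (n + m) (a ++ b) t = Pset S2 m b (t - n).
Proof.
move=> nt tnm; have tm : (t - n).+1 < m by rewrite -subSn // ltn_subLR // ltnW.
rewrite /Pset tnm tm; have take_catE c d : S1 c ->
    take t.+1 (c ++ d) = c ++ take (t - n).+1 d.
  by move=> S1c; rewrite take_cat size_S1 // ltnNge ltnW //= subSn.
apply/seteqP; split => B.
  move=> [_ [[a' S1a' [b' S2b' <-]] [take_eq ->]]]; exists b'.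
  move: take_eq; rewrite !take_catE // => /eqP; rewrite eqseq_cat ?size_S1 // => /andP[_ /eqP ->].
  by rewrite nth_cat size_S1 // ltnNge ltnW //= subSn.
move=> [b' [S2b' [take_eq ->]]]; exists (a ++ b'); split; first by exists a => //; exists b'.
by rewrite !take_catE // take_eq nth_cat size_S1 // ltnNge ltnW //= subSn.
Qed.

Lemma cat_heads :
  [set nth set0 be 0 | be in cat_set S1 S2] = [set nth set0 a' 0 | a' in S1].
Proof.
have nth_cat0 a' b' : S1 a' -> nth set0 (a' ++ b') 0 = nth set0 a' 0.
  by move=> S1a'; rewrite nth_cat size_S1 // n_gt0.
apply/seteqP; split => B.
  by move=> [_ [a' S1a' [b' _ <-]] <-]; exists a' => //; rewrite nth_cat0.
move=> [a' S1a' <-]; exists (a' ++ b); last by rewrite nth_cat0.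
by exists a' => //; exists b.
Qed.

End Prefixes.

Lemma finite_cat_set : finite_set S1 -> finite_set S2 -> finite_set (cat_set S1 S2).
Proof.
move=> finS1 finS2.
apply: sub_finite_set (finite_image (fun p => p.1 ++ p.2) (finite_setX finS1 finS2)).
by move=> _ [a S1a [b S2b <-]]; exists (a, b).
Qed.

Lemma NS_cat_le : finite_set S1 -> finite_set S2 ->
  NS (cat_set S1 S2) (n + m) <= NS S1 n * NS S2 m.
Proof.
move=> finS1 finS2; apply: NS_le (finite_cat_set finS1 finS2) _ => _ [a S1a [b S2b <-]].
apply: leq_trans (leq_mul (NS_ge n finS1 S1a) (NS_ge m finS2 S2b)).
(* P(alpha|[0,n-1]) is the set of initial blocks, so the last factors trade places. *)
rewrite (prodn_cat_swap_last
  (f := fun t => #|` fset_set (Pset (cat_set S1 S2) (n + m) (a ++ b) t)|)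
  (g1 := fun t => #|` fset_set (Pset S1 n a t)|)
  (g2 := fun t => #|` fset_set (Pset S2 m b t)|) n_gt0 m_gt0) //.
- by move=> t tn; rewrite Pset_cat_lt.
- by rewrite Pset_cat_mid // Pset_last.
- move=> t tm; rewrite Pset_cat_ge ?leq_addr ?addKn //.
  by rewrite -addnS ltn_add2l.
- by rewrite !Pset_last ?addn_gt0 ?n_gt0 // (cat_heads S2b).
Qed.

End Concatenation.

Section SpanningConcatenation.
Context {X U : Type}.
Local Open Scope nat_scope.
Variables (F : X -> U -> set X) (Q : set X) (A : set (set X)) (G : set X -> U).
Hypothesis cover : invariant_cover F Q A G.

Lemma cat_spanning n m S1 S2 : 0 < n -> 0 < m ->
  spanning F Q A G n S1 -> spanning F Q A G m S2 ->
  spanning F Q A G (n + m) (cat_set S1 S2).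
Proof.
move=> n_gt0 m_gt0 span1 span2; have [_ _ _ FA] := cover.
have [[W1 _ step1] [W2 _ step2]] := (span1, span2).
have size1 a : S1 a -> size a = n by move=> /W1[].
have size2 b : S2 b -> size b = m by move=> /W2[].
have nth_catE a b t : S1 a ->
    nth set0 (a ++ b) t = if t < n then nth set0 a t else nth set0 b (t - n).
  by move=> S1a; rewrite nth_cat size1.
split.
- move=> _ [a S1a [b S2b <-]]; split => [|t tnm]; first by rewrite size_cat size1 // size2.
  rewrite nth_catE //; case: ltnP => [tn|nt]; first exact: (W1 a S1a).2.
  by apply: (W2 b S2b).2; rewrite ltn_subLR.
- move=> x Qx; have [_ [b S2b _] _] := spanning_heads m_gt0 span2 Qx.
  rewrite Pset_last ?addn_gt0 ?n_gt0 // (cat_heads n_gt0 size1 S2b).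
  exact: spanning_heads n_gt0 span1 _ Qx.
- move=> _ [a S1a [b S2b <-]] t tnm; rewrite nth_catE //.
  case: (ltngtP t.+1 n) => [tn|nt|tn].
  + by rewrite Pset_cat_lt //; exact: step1.
  + by rewrite Pset_cat_ge //; apply: step2 => //; lia.
  + have At : A (nth set0 a t) by apply: (W1 a S1a).2; rewrite -tn.
    subst n; rewrite Pset_cat_mid // => y Fy.
    by apply: spanning_heads m_gt0 span2 _ (FA _ At _ Fy).
Qed.

End SpanningConcatenation.

Section Convergence.
Context {X U : Type}.
Variables (R : realType) (F : X -> U -> set X) (Q : set X) (A : set (set X)) (G : set X -> U).
Hypothesis cover : invariant_cover F Q A G.

Lemma log2_r_inv_subadditive n m : (0 < n)%N -> (0 < m)%N ->
  log2 (r_inv R F Q A G (n + m)%N) <= log2 (r_inv R F Q A G n) + log2 (r_inv R F Q A G m).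
Proof.
move=> n_gt0 m_gt0; have finA : finite_set A by case: cover.
have [S1 [span1 -> _]] := r_inv_attained R (spanning_exists cover n_gt0).
have [S2 [span2 -> _]] := r_inv_attained R (spanning_exists cover m_gt0).
have [S [_ -> S_min]] := r_inv_attained R (spanning_exists cover (ltn_addr m n_gt0)).
apply/log2_nat_leD/(leq_trans (S_min _ (cat_spanning cover n_gt0 m_gt0 span1 span2))).
have [W1 _ _] := span1.
have size1 a : S1 a -> size a = n by move=> /W1[].
exact: NS_cat_le n_gt0 m_gt0 size1 (spanning_finite finA span1) (spanning_finite finA span2).
Qed.

Lemma h_inv_cvg : cvgn (fun n => log2 (r_inv R F Q A G n) / n%:R).
Proof.
apply: fekete; last exact: log2_r_inv_subadditive.
by move=> n; have [k ->] := r_inv_nat F Q A G R n; exact: log2_nat_ge0.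
Qed.

End Convergence.

(** * The atom refinement *)

Lemma invariant_cover_sub_Qu {X U : Type} (F : X -> U -> set X) (Q : set X)
    (A : set (set X)) (G : set X -> U) B :
  invariant_cover F Q A G -> A B -> B `<=` Qu F Q (G B).
Proof.
move=> [_ AQ _ FA] AB y By; split => [|z Fz]; first exact: AQ AB _ By.
by apply: (FA _ AB); exists y.
Qed.

Section AtomRefinement.
Context {X U : Type}.
Local Open Scope nat_scope.
Variables (F : X -> U -> set X) (Q : set X) (V : set U) (C : set (set X)) (GC : set X -> U).
Hypothesis Qu_disjoint : forall a b, V a -> V b -> a <> b -> Qu F Q a `&` Qu F Q b = set0.
Hypothesis Qu_outside : forall c, ~ V c -> Qu F Q c = set0.
Hypothesis atom : atom_refinement F Q V C GC.

Lemma atom_ctrl x : Q x -> V (GC [set x]) /\ Qu F Q (GC [set x]) x.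
Proof. by case: atom => _ + _; apply. Qed.

Lemma atom_invariant_cover : finite_set Q -> invariant_cover F Q C GC.
Proof.
case: atom => -> ctrl _ finQ; split.
- exact: finite_image.
- by move=> _ [x Qx <-] y ->.
- by move=> x Qx; exists [set x] => //; exists x.
- by move=> _ [x Qx <-] z [_ -> Fz]; apply: (ctrl x Qx).2.2.
Qed.

Lemma Qu_nonempty_V u y : Qu F Q u y -> V u.
Proof. by move=> Quy; apply/not_notP => Vu; rewrite Qu_outside in Quy. Qed.

Variables (A : set (set X)) (G : set X -> U).
Hypothesis cover : invariant_cover F Q A G.

Lemma invariant_cover_ctrl B x : A B -> B x -> G B = GC [set x].
Proof.
move=> AB Bx; have Qu_x := invariant_cover_sub_Qu cover AB Bx.
have [V_GCx Qu_GCx] := atom_ctrl Qu_x.1; apply/not_notP => neq.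
have := Qu_disjoint (Qu_nonempty_V Qu_x) V_GCx neq.
by move=> /seteqP[/(_ x (conj Qu_x Qu_GCx))].
Qed.

Lemma invariant_cover_succ_uniq B x y z : A B -> Q x ->
  F x (GC [set x]) y -> F x (GC [set x]) z -> B y -> B z -> y = z.
Proof.
move=> AB Qx Fy Fz By Bz; have [V_GCx Qu_GCx] := atom_ctrl Qx.
have sub := invariant_cover_sub_Qu cover AB.
case: atom => _ _ /(_ _ (G B) _ V_GCx (Qu_nonempty_V (sub _ By)) Qu_GCx).
by apply; split => //; exact: sub.
Qed.

End AtomRefinement.

Section Trajectories.
Context {X U : Type}.
Local Open Scope nat_scope.
Variables (F : X -> U -> set X) (Q : set X) (V : set U) (C : set (set X)) (GC : set X -> U).
Hypothesis atom : atom_refinement F Q V C GC.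

Definition closed_loop_path n (x : nat -> X) : Prop :=
  Q (x 0) /\ forall t, t.+1 < n -> F (x t) (GC [set x t]) (x t.+1).

Definition trajectories n : set (seq (set X)) :=
  [set mkseq (fun t => [set x t]) n | x in closed_loop_path n].

Lemma closed_loop_path_Q n x : closed_loop_path n x -> forall t, t < n -> Q (x t).
Proof.
move=> [Qx0 step]; elim=> // t IH tn.
by apply: (atom_ctrl atom (IH (ltnW tn))).2.2; exact: step.
Qed.

Lemma trajectories_words n : trajectories n `<=` words C n.
Proof.
move=> _ [x path <-]; split => [|t tn]; first by rewrite size_mkseq.
case: atom => -> _ _; rewrite nth_mkseq //; exists (x t) => //.
exact: closed_loop_path_Q path t tn.
Qed.

Lemma Pset_trajectories_sub n x t : t.+1 < n ->
  Pset (trajectories n) n (mkseq (fun s => [set x s]) n) t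
    `<=` [set [set y] | y in F (x t) (GC [set x t])].
Proof.
move=> tn; rewrite /Pset tn => _ [_ [[x' path' <-] [take_eq ->]]].
have x't : x' t = x t.
  apply: eq_set1; have := congr1 (nth set0 ^~ t) take_eq.
  by rewrite !nth_take // !nth_mkseq // ltnW.
by exists (x' t.+1); [rewrite -x't; exact: path'.2 | rewrite nth_mkseq].
Qed.

Hypothesis sys : is_system F.

Lemma closed_loop_ray z : exists y : nat -> X, y 0 = z /\ forall s, F (y s) (GC [set y s]) (y s.+1).
Proof.
have [next next_spec] := choice (fun y => sys y (GC [set y])).
by exists (fun s => iter s next z); split => // s; exact: next_spec.
Qed.

Lemma trajectories_spanning n : 0 < n -> spanning F Q C GC n (trajectories n).
Proof.
move=> n_gt0; split; first exact: trajectories_words.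
- move=> z Qz; rewrite Pset_last //; exists [set z] => //.
  have [y [y0 y_step]] := closed_loop_ray z.
  exists (mkseq (fun t => [set y t]) n); last by rewrite nth_mkseq // y0.
  by exists y => //; split => //; rewrite y0.
- move=> _ [x path <-] t tn z; rewrite nth_mkseq => [[_ -> Fz]|]; last exact: ltnW.
  have Qz : Q z by apply: (atom_ctrl atom (closed_loop_path_Q path (ltnW tn))).2.2.
  have [y [y0 y_step]] := closed_loop_ray z.
  pose x' s := if s <= t then x s else y (s - t.+1).
  have path' : closed_loop_path n x'.
    split => [|s sn]; first exact: path.1.
    rewrite /x'; case: (ltngtP s t) => [st|ts|->]; first exact: path.2.
      by rewrite subSn //; exact: y_step.
    by rewrite subnn y0.
  exists [set z] => //; rewrite /Pset tn; exists (mkseq (fun s => [set x' s]) n).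
  split; first by exists x'.
  split; first by apply: take_mkseq_eq => s; rewrite ltnS /x' => ->.
  by rewrite nth_mkseq // /x' ltnn subnn y0.
Qed.

End Trajectories.

Section TrajectoryBound.
Context {X U : Type}.
Local Open Scope nat_scope.
Variables (F : X -> U -> set X) (Q : set X) (V : set U) (C : set (set X)) (GC : set X -> U).
Hypothesis Qu_disjoint : forall a b, V a -> V b -> a <> b -> Qu F Q a `&` Qu F Q b = set0.
Hypothesis Qu_outside : forall c, ~ V c -> Qu F Q c = set0.
Hypothesis atom : atom_refinement F Q V C GC.
Variables (A : set (set X)) (G : set X -> U).
Hypothesis cover : invariant_cover F Q A G.

Lemma spanning_tracks_path n S x : 0 < n -> spanning F Q A G n S ->
  closed_loop_path F Q GC n x -> exists2 be, S be & forall s, s < n -> nth set0 be s (x s).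
Proof.
move=> n_gt0 span path; have [W _ step] := span.
suff tracks t : t < n -> exists2 be, S be & forall s, s <= t -> nth set0 be s (x s).
  have [|be Sbe be_x] := tracks n.-1; first by rewrite ltn_predL.
  by exists be => // s sn; apply: be_x; rewrite -ltnS prednK.
elim: t => [_|t IH tn].
  have [_ [be Sbe <-] Bx0] := spanning_heads n_gt0 span path.1.
  by exists be => // s; rewrite leqn0 => /eqP ->.
have [be Sbe be_x] := IH (ltnW tn).
have A_bet : A (nth set0 be t) by apply: (W _ Sbe).2; exact: ltnW.
have Fimg_x : Fimg F (nth set0 be t) (G (nth set0 be t)) (x t.+1).
  exists (x t); first exact: be_x.
  rewrite (invariant_cover_ctrl Qu_disjoint Qu_outside atom cover A_bet (be_x t _)) //.
  exact: path.2.
have [B] := step be Sbe t tn _ Fimg_x; rewrite /Pset tn => -[be' [Sbe' [take_eq ->]]] Bx.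
exists be' => // s; rewrite leq_eqVlt => /orP[/eqP -> //|st].
have := congr1 (nth set0 ^~ s) take_eq; rewrite !nth_take // => ->.
exact: be_x.
Qed.

Lemma card_succ_le_Pset n S be t x : spanning F Q A G n S -> S be -> t.+1 < n ->
  nth set0 be t x -> (F x (GC [set x]) #<= Pset S n be t)%card.
Proof.
move=> [W _ step] Sbe tn bet_x; have [_ AQ _ _] := cover.
have A_bet : A (nth set0 be t) by apply: (W _ Sbe).2; exact: ltnW.
apply: card_le_cover.
  move=> y Fy; apply: step => //; exists x => //.
  by rewrite (invariant_cover_ctrl Qu_disjoint Qu_outside atom cover A_bet bet_x).
move=> B y z PB; apply: (invariant_cover_succ_uniq Qu_outside atom cover _ (AQ _ A_bet _ bet_x)).
exact: @Pset_sub _ _ _ _ be t W (ltn_trans (ltn0Sn t) tn) _ PB.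
Qed.

Hypothesis finQ : finite_set Q.

Lemma NS_trajectories_le n S : 0 < n -> spanning F Q A G n S ->
  NS (trajectories F Q GC n) n <= #|` fset_set C| * NS S n.
Proof.
move=> n_gt0 span; have [W _ _] := span.
have finA : finite_set A by case: cover.
have finC : finite_set C by case: (atom_invariant_cover atom finQ).
have finT := sub_finite_set (trajectories_words atom (n := n)) (finite_words n finC).
apply: NS_le finT _ => _ [x path <-].
have [be Sbe be_x] := spanning_tracks_path n_gt0 span path.
have finP t : finite_set (Pset S n be t).
  exact: sub_finite_set (@Pset_sub _ _ _ _ be t W n_gt0) finA.
apply: leq_trans (leq_mul (leqnn _) (NS_ge n (spanning_finite finA span) Sbe)).
apply: (prodn_le_last
  (f := fun t => #|` fset_set (Pset (trajectories F Q GC n) n (mkseq (fun s => [set x s]) n) t)|)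
  (g := fun t => #|` fset_set (Pset S n be t)|)) => // [t tn||].
- apply: card_fset_set_le (finP t) _.
  apply: card_le_trans (subset_card_le (@Pset_trajectories_sub _ _ F Q GC n x t tn)) _.
  exact: card_le_trans (card_image_le _ _) (card_succ_le_Pset span Sbe tn (be_x t (ltnW tn))).
- apply: card_fset_set_le finC (subset_card_le _).
  exact: Pset_sub (trajectories_words atom (n := n)) n_gt0.
- rewrite cardfs_gt0; apply/fset0Pn; exists (nth set0 be 0).
  by rewrite in_fset_set // inE Pset_last //; exists be.
Qed.

End TrajectoryBound.

Lemma h_inv_atom_le (R : realType) {X U : Type} (F : X -> U -> set X) (Q : set X)
    (V : set U) (C : set (set X)) (GC : set X -> U) (A : set (set X)) (G : set X -> U) :
  is_system F -> finite_set Q ->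
  (forall a b, V a -> V b -> a <> b -> Qu F Q a `&` Qu F Q b = set0) ->
  (forall c, ~ V c -> Qu F Q c = set0) ->
  atom_refinement F Q V C GC -> invariant_cover F Q A G ->
  h_inv R F Q C GC <= h_inv R F Q A G.
Proof.
move=> sys finQ Qu_disjoint Qu_outside atom cover.
have coverC := atom_invariant_cover atom finQ.
set sC := fun n : nat => log2 (r_inv R F Q C GC n) / n%:R.
set sA := fun n : nat => log2 (r_inv R F Q A G n) / n%:R.
set c := log2 (#|` fset_set C|%:R : R).
have sC_le n : (0 < n)%N -> sC n <= sA n + c / n%:R.
  move=> n_gt0; rewrite /sC /sA.
  have [S0 [_ -> S0_min]] := r_inv_attained R (spanning_exists coverC n_gt0).
  have [S [span -> _]] := r_inv_attained R (spanning_exists cover n_gt0).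
  have := S0_min _ (trajectories_spanning atom sys n_gt0).
  move=> /leq_trans/(_ (NS_trajectories_le Qu_disjoint Qu_outside atom cover finQ n_gt0 span)).
  move=> /(log2_nat_leD R); rewrite addrC => le_log.
  by rewrite -mulrDl ler_wpM2r // invr_ge0 ler0n.
have sA_c_cvg : (fun n => sA n + c / n%:R) @ \oo --> limn sA + 0.
  exact: cvgD (h_inv_cvg cover) (cvgn_div_nat c).
rewrite /h_inv -/sC -/sA -[limn sA]addr0 -(cvg_lim _ sA_c_cvg) //.
apply: ler_lim; [exact: h_inv_cvg coverC | by apply/cvg_ex; eexists; exact: sA_c_cvg |].
by near=> n; apply: sC_le; near: n; exists 1%N.
Unshelve. all: by end_near. Qed.

Theorem theorem3p13 (R : realType) (X U : Type) (F : X -> U -> set X)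
  (Q : set X) (V : set U) (C : set (set X)) (GC : set X -> U) :
  inhabited X -> inhabited U -> is_system F ->
  controlled_invariant F Q -> finite_set Q ->
  finite_set V -> is_cover F Q V ->
  (forall a b, V a -> V b -> a <> b -> Qu F Q a `&` Qu F Q b = set0) ->
  (forall a b, V a -> V b -> Mab F Q a b ->
     exists K, K `<=` Qu F Q a /\ Qu F Q b `<=` Fimg F K a) ->
  (forall c, ~ V c -> Qu F Q c = set0) ->
  atom_refinement F Q V C GC ->
  h_fb_inv R F Q = h_inv R F Q C GC.
Proof.
move=> _ _ sys _ finQ _ _ Qu_disjoint _ Qu_outside atom.
apply: inf_attained; first by exists (C, GC); first exact: atom_invariant_cover atom finQ.
by move=> _ [[A G] cover <-]; exact: h_inv_atom_le sys finQ Qu_disjoint Qu_outside atom cover.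
Qed.
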